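(* Let $R$ be a commutative ring with identity and $M$ a non-zero comultiplication $R$-module such that $G'(M)$ is non-null. The following are equivalent: (i) $G'(M)$ is not connected; (ii) $|\mathrm{Min}(M)|=2$; (iii) $G'(M)$ is the disjoint union of two complete subgraphs $G'_1$ and $G'_2$ with no edges between them.
   Context: An $R$-module $M$ is a comultiplication module if for every submodule $N$ of $M$ there is an ideal $I$ of $R$ with $N=\mathrm{Ann}_M(I)$. A submodule $N$ of $M$ is large if $N\cap L\neq 0$ for every non-zero submodule $L$ of $M$. $\mathrm{Min}(M)$ is the set of minimal submodules of $M$. The large sum graph $G'(M)$ has as vertex set the set of all non-zero non-large submodules of $M$, and two distinct vertices $N,K$ are adjacent iff $N+K$ is non-large in $M$. *)

(* Modules are [lmodType R] over a commutative ring [R];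
   submodules and ideals are Prop-valued subsets (the module may be infinite). *)
From HB Require Import structures.
From mathcomp Require Import all_boot all_order all_algebra.
From Stdlib Require Import Relations.
Set Implicit Arguments. Unset Strict Implicit. Unset Printing Implicit Defensive.
Import GRing.Theory.
Local Open Scope ring_scope.

Section Defs.
Variables (R : comPzRingType) (M : lmodType R).

Definition subset (A B : M -> Prop) := forall x, A x -> B x.
Definition seteq (A B : M -> Prop) := forall x, A x <-> B x.

Definition is_submodule (N : M -> Prop) : Prop :=
  N 0 /\ (forall x y, N x -> N y -> N (x + y)) /\ (forall (r : R) x, N x -> N (r *: x)).

Definition is_ideal (I : R -> Prop) : Prop :=
  I 0 /\ (forall a b, I a -> I b -> I (a + b)) /\ (forall r a, I a -> I (r * a)).

Definition annM (I : R -> Prop) : M -> Prop := fun m => forall r, I r -> r *: m = 0.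

Definition comultiplication_module : Prop :=
  forall N, is_submodule N -> exists I, is_ideal I /\ seteq N (annM I).

Definition nonzero_sub (N : M -> Prop) : Prop := exists x, N x /\ x <> 0.

Definition module_nonzero : Prop := exists x : M, x <> 0.

Definition is_large (N : M -> Prop) : Prop :=
  forall L, is_submodule L -> nonzero_sub L -> exists x, N x /\ L x /\ x <> 0.

Definition is_minimal (N : M -> Prop) : Prop :=
  is_submodule N /\ nonzero_sub N /\
  forall L, is_submodule L -> nonzero_sub L -> subset L N -> seteq L N.

Definition sum_sub (N K : M -> Prop) : M -> Prop :=
  fun x => exists a b, N a /\ K b /\ x = a + b.

Definition vertex (N : M -> Prop) : Prop :=
  is_submodule N /\ nonzero_sub N /\ ~ is_large N.

Definition adj (N K : M -> Prop) : Prop :=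
  vertex N /\ vertex K /\ ~ seteq N K /\ ~ is_large (sum_sub N K).

Definition graph_nonnull : Prop := exists N, vertex N.

(* vertices are identified up to set equality *)
Definition step (N K : M -> Prop) : Prop :=
  vertex N /\ vertex K /\ (seteq N K \/ adj N K).

Definition graph_connected : Prop :=
  forall N K, vertex N -> vertex K -> clos_refl_trans (M -> Prop) step N K.

Definition two_minimal : Prop :=
  exists A B, is_minimal A /\ is_minimal B /\ ~ seteq A B /\
    forall N, is_minimal N -> seteq N A \/ seteq N B.

Definition two_complete_components : Prop :=
  exists V1 V2 : (M -> Prop) -> Prop,
    (exists N, V1 N) /\ (exists N, V2 N) /\
    (forall N, V1 N -> vertex N) /\ (forall N, V2 N -> vertex N) /\
    (forall N, vertex N -> V1 N \/ V2 N) /\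
    (forall N K, V1 N -> V2 K -> ~ seteq N K) /\
    (forall N K, V1 N -> V1 K -> ~ seteq N K -> adj N K) /\
    (forall N K, V2 N -> V2 K -> ~ seteq N K -> adj N K) /\
    (forall N K, V1 N -> V2 K -> ~ adj N K).
End Defs.

(* In a comultiplication module every submodule N equals Ann_M(Ann_R(N)).  Two
   consequences drive the proof: every non-zero submodule contains a minimal one
   (for x <> 0 and a maximal ideal m containing Ann(x), the part of Rx killed by m
   is minimal), and a minimal submodule contained in N + K lies in N or in K.
   Hence a submodule is large iff it contains every minimal submodule, and two
   distinct vertices are adjacent as soon as some minimal submodule lies in
   neither.  Unless Min(M) = {A, B}, any two vertices are joined by a path
   N - C - D - K through minimal submodules C in N and D in K, the edge C - D
   being witnessed by a third minimal submodule; if Min(M) = {A, B}, every vertex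
   contains exactly one of A and B, which splits G'(M) into two complete pieces. *)

From Pilot Require Import Defs.
From mathcomp Require Import all_boot all_order all_algebra.
From mathcomp Require Import boolp.
From mathcomp Require classical_sets.
From Stdlib Require Import Classical Relations.

Set Implicit Arguments. Unset Strict Implicit. Unset Printing Implicit Defensive.
Import GRing.Theory.
Local Open Scope ring_scope.

Section Ideals.
Variable R : comPzRingType.

Definition proper_ideal (I : R -> Prop) : Prop := is_ideal I /\ ~ I 1.

Definition maximal_ideal (m : R -> Prop) : Prop :=
  proper_ideal m /\
  forall J, proper_ideal J -> (forall r, m r -> J r) -> forall r, J r -> m r.

Lemma proper_ideal_chain_union (T : Type) (A : T -> Prop) (F : T -> R -> Prop) :
  (exists t, A t) -> (forall t, A t -> proper_ideal (F t)) ->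
  (forall s t, A s -> A t -> (forall r, F s r -> F t r) \/ (forall r, F t r -> F s r)) ->
  proper_ideal (fun r => exists2 t, A t & F t r).
Proof.
move=> [t0 At0] Fproper Ftotal.
split; last by case=> t At; case: (Fproper t At).
split; first by exists t0 => //; case: (Fproper t0 At0) => [[]].
split.
  move=> a b [s As Fsa] [t At Ftb].
  case: (Ftotal s t As At) => [st|ts].
    by exists t => //; case: (Fproper t At) => [[_ [FD _]] _]; apply: FD => //; apply: st.
  by exists s => //; case: (Fproper s As) => [[_ [FD _]] _]; apply: FD => //; apply: ts.
move=> r a [t At Fta]; exists t => //.
by case: (Fproper t At) => [[_ [_ FM]] _]; apply: FM.
Qed.

Lemma exists_maximal_ideal (I : R -> Prop) :
  proper_ideal I -> exists2 m, maximal_ideal m & forall r, I r -> m r.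
Proof.
move=> Iproper.
pose above_I J := proper_ideal J /\ forall r, I r -> J r.
pose T := {J | above_I J}.
pose le (J K : T) := `[< forall r, sval J r -> sval K r >].
have I_T : above_I I by [].
have [|||m mmax] := @classical_sets.ZL_preorder T (exist _ I I_T) le.
- by move=> J; apply/asboolP.
- by move=> J K L /asboolP JK /asboolP KL; apply/asboolP => r /JK /KL.
- move=> A Atotal.
  have [[t0 At0]|A0] := pselect (exists t, A t); last first.
    by exists (exist _ I I_T) => t At; case: A0; exists t.
  have Uproper : proper_ideal (fun r => exists2 t, A t & sval t r).
    apply: proper_ideal_chain_union => [|t _|s t As At]; first by exists t0.
      exact: (proj1 (svalP t)).
    by case: (Atotal s t As At) => /asboolP; [left|right].
  have IU : forall r, I r -> exists2 t, A t & sval t r.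
    by move=> r Ir; exists t0 => //; apply: (proj2 (svalP t0)).
  by exists (exist above_I _ (conj Uproper IU)) => t At; apply/asboolP => r; exists t.
exists (sval m); last exact: (proj2 (svalP m)).
split; first exact: (proj1 (svalP m)).
move=> J Jproper mJ.
have IJ : forall r, I r -> J r by move=> r /(proj2 (svalP m)) /mJ.
by move: (mmax (exist above_I J (conj Jproper IJ))) => /(_ (asboolT mJ)) /asboolP.
Qed.

End Ideals.

Section Submodules.
Variables (R : comPzRingType) (M : lmodType R).

Lemma scalerAC (r s : R) (v : M) : r *: (s *: v) = s *: (r *: v).
Proof. by rewrite !scalerA mulrC. Qed.

Definition cyclic_submodule (x : M) : M -> Prop := fun y => exists r, y = r *: x.

Definition annR (N : M -> Prop) : R -> Prop := fun r => forall y, N y -> r *: y = 0.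

Lemma is_submodule_cyclic x : is_submodule (cyclic_submodule x).
Proof.
split; first by exists 0; rewrite scale0r.
split; first by move=> y z [r ->] [s ->]; exists (r + s); rewrite scalerDl.
by move=> r y [s ->]; exists (r * s); rewrite scalerA.
Qed.

Lemma cyclic_self x : cyclic_submodule x x.
Proof. by exists 1; rewrite scale1r. Qed.

Lemma cyclic_subset (N : M -> Prop) x :
  is_submodule N -> N x -> Defs.subset (cyclic_submodule x) N.
Proof. by move=> [_ [_ NZ]] Nx y [r ->]; apply: NZ. Qed.

Lemma minimal_subset_cyclic (S : M -> Prop) x :
  is_minimal S -> S x -> x <> 0 -> Defs.subset S (cyclic_submodule x).
Proof.
move=> [Ssub [_ Smin]] Sx x0 y Sy.
have Rx_nz : nonzero_sub (cyclic_submodule x) by exists x; split=> //; apply: cyclic_self.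
by apply/(Smin _ (is_submodule_cyclic x) Rx_nz (cyclic_subset Ssub Sx) y).
Qed.

Lemma not_subset_witness (A B : M -> Prop) :
  ~ Defs.subset A B -> exists2 x, A x & ~ B x.
Proof.
move=> AB; apply: NNPP => none; apply: AB => x Ax.
by apply: NNPP => Bx; apply: none; exists x.
Qed.

Lemma minimal_eq_of_subset (S T : M -> Prop) :
  is_minimal S -> is_minimal T -> Defs.subset T S -> seteq T S.
Proof. by move=> [_ [_ Smin]] [Tsub [Tnz _]]; apply: Smin. Qed.

Lemma is_submodule_sum (N K : M -> Prop) :
  is_submodule N -> is_submodule K -> is_submodule (sum_sub N K).
Proof.
move=> [N0 [ND NZ]] [K0 [KD KZ]].
split; first by exists 0, 0; rewrite addr0.
split.
  move=> _ _ [a [b [Na [Kb ->]]]] [c [d [Nc [Kd ->]]]].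
  by exists (a + c), (b + d); rewrite addrACA; split; [apply: ND|split; [apply: KD|]].
move=> r _ [a [b [Na [Kb ->]]]]; exists (r *: a), (r *: b).
by rewrite scalerDr; split; [apply: NZ|split; [apply: KZ|]].
Qed.

Lemma subset_suml (N K : M -> Prop) : is_submodule K -> Defs.subset N (sum_sub N K).
Proof. by move=> [K0 _] x Nx; exists x, 0; rewrite addr0. Qed.

Lemma subset_sumr (N K : M -> Prop) : is_submodule N -> Defs.subset K (sum_sub N K).
Proof. by move=> [N0 _] x Kx; exists 0, x; rewrite add0r. Qed.

Lemma is_submodule_annM (I : R -> Prop) : is_submodule (annM (M:=M) I).
Proof.
split; first by move=> r _; rewrite scaler0.
split; first by move=> x y Ix Iy r Ir; rewrite scalerDr Ix // Iy // addr0.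
by move=> s x Ix r Ir; rewrite scalerAC Ix // scaler0.
Qed.

Lemma is_ideal_annR (N : M -> Prop) : is_ideal (annR N).
Proof.
split; first by move=> y _; rewrite scale0r.
split; first by move=> a b Na Nb y Ny; rewrite scalerDl Na // Nb // addr0.
by move=> r a Na y Ny; rewrite -scalerA Na // scaler0.
Qed.

Lemma annR_proper (N : M -> Prop) : nonzero_sub N -> proper_ideal (annR N).
Proof.
move=> [y [Ny y0]]; split; first exact: is_ideal_annR.
by move=> N1; apply: y0; rewrite -(scale1r y) N1.
Qed.

Lemma subset_annM_annR (N : M -> Prop) : Defs.subset N (annM (annR N)).
Proof. by move=> y Ny r; apply. Qed.

Lemma annR_sum (N K : M -> Prop) a b :
  annR N a -> annR K b -> annR (sum_sub N K) (a * b).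
Proof.
move=> Na Kb _ [n [k [Nn [Kk ->]]]].
by rewrite scalerDr -!scalerA (Kb k) // (scalerAC a b) (Na n) // !scaler0 addr0.
Qed.

Lemma not_annM (I : R -> Prop) (x : M) : ~ annM I x -> exists2 a, I a & a *: x <> 0.
Proof.
move=> xI; apply: NNPP => noa; apply: xI => r Ir.
by apply: NNPP => rx0; apply: noa; exists r.
Qed.

Lemma large_subset_minimal (X A : M -> Prop) :
  is_submodule X -> is_large X -> is_minimal A -> Defs.subset A X.
Proof.
move=> Xsub Xlarge Amin; have [Asub [Anz _]] := Amin.
have [x [Xx [Ax x0]]] := Xlarge A Asub Anz.
by move=> y /(minimal_subset_cyclic Amin Ax x0) /(cyclic_subset Xsub Xx).
Qed.

Lemma vertex_of_minimal (C A : M -> Prop) :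
  is_minimal C -> is_minimal A -> ~ Defs.subset A C -> vertex C.
Proof.
move=> Cmin Amin AC; have [Csub [Cnz _]] := Cmin.
by split=> //; split=> // Clarge; apply: AC; apply: large_subset_minimal.
Qed.

End Submodules.

Section Comultiplication.
Variables (R : comPzRingType) (M : lmodType R).
Hypothesis comult : comultiplication_module M.

Lemma annM_annR (N : M -> Prop) : is_submodule N -> seteq N (annM (annR N)).
Proof.
move=> Nsub y; split; first exact: subset_annM_annR.
have [I [_ NI]] := comult Nsub.
by move=> yN; apply/NI => r Ir; apply: yN => z /NI; apply.
Qed.

(* Take s in S \ N, s' in S \ K and, as N = Ann_M(Ann_R N), a in Ann_R N and
   b in Ann_R K with a s <> 0 <> b s'.  Then a b kills N + K, hence S; but S is
   generated by a s, so b s' = r (a b) s = 0. *)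
Lemma minimal_subset_sum (S N K : M -> Prop) : is_minimal S -> is_submodule N ->
  is_submodule K -> Defs.subset S (sum_sub N K) -> Defs.subset S N \/ Defs.subset S K.
Proof.
move=> Smin Nsub Ksub SNK; apply: NNPP => /not_or_and [SN SK].
have [s Ss sN] := not_subset_witness SN.
have [s' Ss' s'K] := not_subset_witness SK.
have [a Na as0] : exists2 a, annR N a & a *: s <> 0.
  by apply: not_annM => sNN; apply/sN/(annM_annR Nsub).
have [b Kb bs'0] : exists2 b, annR K b & b *: s' <> 0.
  by apply: not_annM => s'KK; apply/s'K/(annM_annR Ksub).
have Sas : S (a *: s) by case: Smin => [[_ [_ SZ]] _]; apply: SZ.
move: bs'0; have [r ->] := minimal_subset_cyclic Smin Sas as0 Ss'.
by rewrite (scalerAC b r) (scalerA b a) (mulrC b a) (annR_sum Na Kb) ?scaler0 //; apply: SNK.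
Qed.

Definition annM_cyclic (m : R -> Prop) (x : M) : M -> Prop :=
  fun y => cyclic_submodule x y /\ annM m y.

Lemma is_submodule_annM_cyclic m x : is_submodule (annM_cyclic m x).
Proof.
have [C0 [CD CZ]] := is_submodule_cyclic x.
have [A0 [AD AZ]] := is_submodule_annM M m.
split; first by [].
split; first by move=> y z [Cy Ay] [Cz Az]; split; [apply: CD|apply: AD].
by move=> r y [Cy Ay]; split; [apply: CZ|apply: AZ].
Qed.

(* If annM_cyclic m x were 0, then every r in Ann(m x) kills x, so x lies in
   Ann(Ann(m x)) = m x, i.e. x = a x with a in m; then 1 - a in Ann(x) puts 1 in m. *)
Lemma annM_cyclic_nonzero m x : proper_ideal m ->
  (forall r, annR (cyclic_submodule x) r -> m r) -> nonzero_sub (annM_cyclic m x).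
Proof.
move=> [[m0 [mD mM]] m1] ann_m; apply: NNPP => zero.
pose mx := fun y => exists2 a, m a & y = a *: x.
have mx_sub : is_submodule mx.
  split; first by exists 0; rewrite ?scale0r.
  split.
    by move=> _ _ [a ma ->] [b mb ->]; exists (a + b); rewrite ?scalerDl //; apply: mD.
  by move=> r _ [a ma ->]; exists (r * a); rewrite ?scalerA //; apply: mM.
have [a ma xa] : mx x.
  apply/(annM_annR mx_sub) => r mx_r; apply: NNPP => rx0; apply: zero.
  exists (r *: x); split=> //; split; first by exists r.
  by move=> b mb; rewrite scalerAC mx_r //; exists b.
have ann_1a : annR (cyclic_submodule x) (1 - a).
  by move=> _ [s ->]; rewrite scalerAC scalerBl scale1r -xa subrr scaler0.
by apply: m1; rewrite -(subrK a 1) addrC; apply: mD => //; apply: ann_m.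
Qed.

Lemma annM_cyclic_minimal m x : maximal_ideal m ->
  forall L, is_submodule L -> nonzero_sub L -> Defs.subset L (annM_cyclic m x) ->
  seteq L (annM_cyclic m x).
Proof.
move=> [_ m_max] L Lsub Lnz LS y; split; first exact: LS.
move=> [_ ym]; apply/(annM_annR Lsub) => r Lr; apply: ym.
apply: (m_max _ (annR_proper Lnz)) => // a ma z /LS [_ zm].
exact: zm.
Qed.

Lemma exists_minimal_subset (N : M -> Prop) :
  is_submodule N -> nonzero_sub N -> exists2 S, is_minimal S & Defs.subset S N.
Proof.
move=> Nsub [x [Nx x0]].
have Rx_nz : nonzero_sub (cyclic_submodule x) by exists x; split=> //; apply: cyclic_self.
have [m m_max ann_m] := exists_maximal_ideal (annR_proper Rx_nz).
exists (annM_cyclic m x); last by move=> y [Rxy _]; apply: cyclic_subset Rxy.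
split; first exact: is_submodule_annM_cyclic.
split; first exact: annM_cyclic_nonzero (proj1 m_max) ann_m.
exact: annM_cyclic_minimal.
Qed.

Lemma large_of_subset_minimals (X : M -> Prop) :
  (forall A, is_minimal A -> Defs.subset A X) -> is_large X.
Proof.
move=> minX L Lsub Lnz.
have [A Amin AL] := exists_minimal_subset Lsub Lnz.
have [_ [[a [Aa a0]] _]] := Amin.
by exists a; split; [apply: minX Amin a Aa|split; [apply: AL|]].
Qed.

Lemma not_large_exists_minimal (X : M -> Prop) :
  ~ is_large X -> exists2 A, is_minimal A & ~ Defs.subset A X.
Proof.
move=> Xsmall; apply: NNPP => noA; apply: Xsmall; apply: large_of_subset_minimals.
by move=> A Amin; apply: NNPP => AX; apply: noA; exists A.
Qed.

Lemma adj_of_missing_minimal (A N K : M -> Prop) : is_minimal A ->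
  vertex N -> vertex K -> ~ Defs.subset A N -> ~ Defs.subset A K -> ~ seteq N K ->
  adj N K.
Proof.
move=> Amin Nv Kv AN AK NK; do 3!split=> //.
have [[Nsub _] [Ksub _]] := (Nv, Kv).
move=> /(large_subset_minimal (is_submodule_sum Nsub Ksub)) /(_ Amin).
by move=> /(minimal_subset_sum Amin Nsub Ksub) [].
Qed.

Lemma step_of_missing_minimal (A N K : M -> Prop) : is_minimal A ->
  vertex N -> vertex K -> ~ Defs.subset A N -> ~ Defs.subset A K -> step N K.
Proof.
move=> Amin Nv Kv AN AK; do 2!split=> //.
case: (classic (seteq N K)) => NK; [by left|right].
exact: adj_of_missing_minimal Amin Nv Kv AN AK NK.
Qed.

Lemma connected_of_not_two_minimal : ~ two_minimal M -> graph_connected M.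
Proof.
move=> not_two.
have to_minimal (N : M -> Prop) : vertex N ->
    exists C, [/\ is_minimal C, vertex C, step N C & step C N].
  move=> Nv; have [Nsub [Nnz Nsmall]] := Nv.
  have [C Cmin CN] := exists_minimal_subset Nsub Nnz.
  have [A Amin AN] := not_large_exists_minimal Nsmall.
  have AC : ~ Defs.subset A C by move=> AC; apply: AN => y /AC /CN.
  have Cv := vertex_of_minimal Cmin Amin AC.
  by exists C; split=> //; apply: step_of_missing_minimal Amin _ _ _ _.
have minimal_step (C D : M -> Prop) :
    is_minimal C -> is_minimal D -> vertex C -> vertex D -> step C D.
  move=> Cmin Dmin Cv Dv.
  have [CD|CD] := classic (seteq C D); first by do 2!split=> //; left.
  have [T [Tmin TC TD]] : exists T, [/\ is_minimal T, ~ seteq T C & ~ seteq T D].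
    apply: NNPP => noT; apply: not_two; exists C, D; do 3!split=> //.
    by move=> T Tmin; apply: NNPP => /not_or_and [TC TD]; apply: noT; exists T.
  apply: (step_of_missing_minimal Tmin) => // [/(minimal_eq_of_subset Cmin Tmin)|
    /(minimal_eq_of_subset Dmin Tmin)]; [exact: TC|exact: TD].
move=> N K Nv Kv.
have [C [Cmin Cv NC _]] := to_minimal N Nv.
have [D [Dmin Dv _ DK]] := to_minimal K Kv.
apply: rt_trans (rt_step _ _ _ _ NC) _.
exact: rt_trans (rt_step _ _ _ _ (minimal_step C D Cmin Dmin Cv Dv)) (rt_step _ _ _ _ DK).
Qed.

Lemma two_complete_of_two_minimal : two_minimal M -> two_complete_components M.
Proof.
move=> [A [B [Amin [Bmin [AB only_AB]]]]].
have Av : vertex A.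
  by apply: (vertex_of_minimal Amin Bmin) => /(minimal_eq_of_subset Amin Bmin) BA;
    apply: AB => y; split => /BA.
have Bv : vertex B.
  by apply: (vertex_of_minimal Bmin Amin) => /(minimal_eq_of_subset Bmin Amin).
have large_AB (X : M -> Prop) : Defs.subset A X -> Defs.subset B X -> is_large X.
  move=> AX BX; apply: large_of_subset_minimals => T /only_AB [TA|TB] y Ty.
    by apply/AX/TA.
  by apply/BX/TB.
have contains_A_or_B (X : M -> Prop) : vertex X -> Defs.subset A X \/ Defs.subset B X.
  move=> [Xsub [Xnz _]]; have [T /only_AB [TA|TB] TX] := exists_minimal_subset Xsub Xnz.
    by left=> y /TA /TX.
  by right=> y /TB /TX.
have one_of_A_B (X : M -> Prop) : vertex X -> Defs.subset A X -> ~ Defs.subset B X.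
  by move=> [_ [_ Xsmall]] AX BX; apply/Xsmall/large_AB.
exists (fun X => vertex X /\ Defs.subset A X), (fun X => vertex X /\ Defs.subset B X).
split; first by exists A; split=> // y.
split; first by exists B; split=> // y.
split; first by move=> N [].
split; first by move=> N [].
split; first by move=> N Nv; case: (contains_A_or_B N Nv) => ?; [left|right].
split.
  by move=> N K [Nv AN] [_ BK] NK; apply: (one_of_A_B N Nv AN) => y /BK /NK.
split.
  move=> N K [Nv AN] [Kv AK].
  exact: adj_of_missing_minimal Bmin Nv Kv (one_of_A_B N Nv AN) (one_of_A_B K Kv AK).
split.
  move=> N K [Nv BN] [Kv BK].
  apply: (adj_of_missing_minimal Amin Nv Kv).
  - by move=> AN; apply: one_of_A_B Nv AN BN.
  - by move=> AK; apply: one_of_A_B Kv AK BK.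
move=> N K [[Nsub _] AN] [[Ksub _] BK] [_ [_ [_ NKsmall]]]; apply/NKsmall/large_AB.
  by move=> y /AN /(subset_suml Ksub).
by move=> y /BK /(subset_sumr Nsub).
Qed.

End Comultiplication.

Lemma not_connected_of_two_complete (R : comPzRingType) (M : lmodType R) :
  two_complete_components M -> ~ graph_connected M.
Proof.
move=> [V1 [V2 [[N1 V1N1] [[N2 V2N2] [V1v [V2v [cover [V12 [_ [_ no_edge]]]]]]]]]] conn.
have V1_closed X Y : clos_refl_trans _ (@step R M) X Y -> V1 X -> V1 Y.
  elim=> [X' Y' [_ [Yv XY]] V1X| // |X' Y' Z' _ IH1 _ IH2 /IH1 /IH2 //].
  case: (cover Y' Yv) => // V2Y; case: XY => [XY|XY].
    by case: (V12 X' Y' V1X V2Y XY).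
  by case: (no_edge X' Y' V1X V2Y XY).
have V1N2 := V1_closed N1 N2 (conn N1 N2 (V1v N1 V1N1) (V2v N2 V2N2)) V1N1.
by apply: (V12 N2 N2 V1N2 V2N2) => y.
Qed.

Theorem theorem2p6 (R : comPzRingType) (M : lmodType R) :
  module_nonzero M -> comultiplication_module M -> graph_nonnull M ->
  (~ graph_connected M <-> two_minimal M) /\
  (two_minimal M <-> two_complete_components M).
Proof.
move=> _ comult _.
have not_connected_two : ~ graph_connected M -> two_minimal M.
  by move=> not_conn; apply: NNPP => not_two; apply/not_conn/connected_of_not_two_minimal.
have two_complete := two_complete_of_two_minimal comult.
split; split=> //.
- by move=> /two_complete; apply: not_connected_of_two_complete.
- by move=> /not_connected_of_two_complete; apply: not_connected_two.
Qed.
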